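(* Let $V$ be a finite-dimensional real vector space with a Lorentzian inner product $g$, and let $V=E_1\oplus\cdots\oplus E_r$ ($r\ge 1$) be a $g$-orthogonal direct sum of subspaces on each of which $g$ is non-degenerate, with $E_r$ Lorentzian. For $1\le\beta\le r$ let $g_\beta$ be the symmetric bilinear form $g_\beta(X,Y)=g(X_\beta,Y_\beta)$, where $X_\beta,Y_\beta$ are the $E_\beta$-components of $X,Y$. Let $p\in E_r$ be a non-zero light-like vector and $\theta=g(p,\cdot)$. Let $\bar g_1=g,\bar g_2,\dots,\bar g_{r+1}$ be linearly independent symmetric bilinear forms on $V$ of the form $$\bar g_\alpha=\sum_{\beta=1}^r C_{\beta\alpha}g_\beta+C_{r+1\,\alpha}\,\theta\otimes\theta,\qquad C_{\beta\alpha}\in\mathbb{R},$$ and assume $C_{r\alpha}=0$ for all $2\le\alpha\le r+1$. Let $2\le\alpha\le r+1$. If $C_{r+1\,\alpha}=0$, then $$\ker\bar g_\alpha=\bigoplus_{1\le\beta\le r,\ C_{\beta\alpha}=0}E_\beta\quad\text{and}\quad \ker\big(g|_{\ker\bar g_\alpha\times\ker\bar g_\alpha}\big)=0.$$ If $C_{r+1\,\alpha}\neq0$, then $$\ker\bar g_\alpha=\bigoplus_{1\le\beta\le r-1,\ C_{\beta\alpha}=0}E_\beta\ \oplus\ \{X\in E_r\mid\theta(X)=0\}\quad\text{and}\quad \ker\big(g|_{\ker\bar g_\alpha\times\ker\bar g_\alpha}\big)=\mathbb{R}p.$$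
   Context: For a symmetric bilinear form $b$ on $V$, $\ker b=\{X\in V\mid b(X,Y)=0\ \forall Y\in V\}$. For a subspace $U$, $g|_{U\times U}$ denotes the restriction of $g$ to $U$ and $\ker(g|_{U\times U})=\{X\in U\mid g(X,Y)=0\ \forall Y\in U\}$. (In the paper, $V=T_xM$ for a Lorentzian manifold and the $E_\beta$ come from its Wu decomposition; the forms $\bar g_\alpha$ are a basis of parallel symmetric bilinear forms evaluated at $x$.) *)

From HB Require Import structures.
From mathcomp Require Import all_boot all_order all_algebra.
From mathcomp Require Import reals.
Set Implicit Arguments. Unset Strict Implicit. Unset Printing Implicit Defensive.
Import Order.TTheory GRing.Theory Num.Theory.
Local Open Scope ring_scope.

Section Forms.
Variables (R : realType) (V : vectType R).

Definition is_bilin_form (b : V -> V -> R) : Prop :=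
  (forall a x1 x2 y, b (a *: x1 + x2) y = a * b x1 y + b x2 y) /\
  (forall a x y1 y2, b x (a *: y1 + y2) = a * b x y1 + b x y2).

Definition is_symm_form (b : V -> V -> R) : Prop :=
  forall x y, b x y = b y x.

Definition form_ker (b : V -> V -> R) (X : V) : Prop :=
  forall Y, b X Y = 0.

Definition restr_ker (b : V -> V -> R) (U : V -> Prop) (X : V) : Prop :=
  U X /\ forall Y, U Y -> b X Y = 0.

Definition nondeg_on (b : V -> V -> R) (U : {vspace V}) : Prop :=
  forall X, X \in U -> (forall Y, Y \in U -> b X Y = 0) -> X = 0.

Definition negdef_on (b : V -> V -> R) (W : {vspace V}) : Prop :=
  forall X, X \in W -> X != 0 -> b X X < 0.

Definition lorentzian_on (b : V -> V -> R) (U : {vspace V}) : Prop :=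
  nondeg_on b U /\
  (exists W : {vspace V}, (W <= U)%VS /\ negdef_on b W /\ \dim W = 1%N) /\
  (forall W : {vspace V}, (W <= U)%VS -> negdef_on b W -> (\dim W <= 1)%N).

(* component of X in E i with respect to the decomposition V = sum_i E i
   (meaningful when the sum is direct) *)
Definition comp (r : nat) (E : 'I_r -> {vspace V}) (i : 'I_r) : 'End(V) :=
  sumv_pi_for (erefl (\sum_(j < r) E j)%VS) i.

Definition gpart (g : V -> V -> R) (r : nat) (E : 'I_r -> {vspace V})
  (i : 'I_r) (X Y : V) : R :=
  g (comp E i X) (comp E i Y).

(* bar g_alpha = sum_beta C_{beta alpha} g_beta + C_{r+1 alpha} theta (x) theta,
   with indices shifted to 0-based: E : 'I_k.+1 -> ..., the last block
   (index ord_max = k, paper's E_r) is Lorentzian; C : 'M_(k.+2),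
   row index k.+1 (ord_max) is the theta(x)theta coefficient, column 0
   is bar g_1 = g. *)
Definition gbar (g : V -> V -> R) (k : nat) (E : 'I_k.+1 -> {vspace V})
  (p : V) (C : 'M[R]_(k.+2)) (a : 'I_k.+2) (X Y : V) : R :=
  \sum_(b < k.+1) C (widen_ord (leqnSn _) b) a * gpart g E b X Y
  + C ord_max a * (g p X * g p Y).

End Forms.

From Pilot Require Import Defs.
From HB Require Import structures.
From mathcomp Require Import all_boot all_order all_algebra.
From mathcomp Require Import reals.
From Stdlib Require Import Classical.
From mathcomp Require Import ring.
Set Implicit Arguments. Unset Strict Implicit. Unset Printing Implicit Defensive.
Import Order.TTheory GRing.Theory Num.Theory.
Local Open Scope ring_scope.

(* Because C_{r alpha} = 0, bar g_alpha is C_{r+1 alpha} theta (x) theta on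
   E_r and C_{beta alpha} g_beta on every other block E_beta, to which p is
   g-orthogonal.  By non-degeneracy of the blocks, X lies in ker bar g_alpha
   iff X_beta = 0 whenever C_{beta alpha} <> 0, and theta(X) = 0 whenever
   C_{r+1 alpha} <> 0.  An element of this kernel that is g-orthogonal to the
   whole kernel has, moreover, X_beta = 0 on every block contained in the
   kernel. *)

Section BilinearForm.
Variables (R : realType) (V : vectType R) (g : V -> V -> R).
Hypothesis g_bilin : is_bilin_form g.

Lemma formDl x1 x2 y : g (x1 + x2) y = g x1 y + g x2 y.
Proof. by rewrite -[x1]scale1r (proj1 g_bilin) mul1r scale1r. Qed.

Lemma formDr x y1 y2 : g x (y1 + y2) = g x y1 + g x y2.
Proof. by rewrite -[y1]scale1r (proj2 g_bilin) mul1r scale1r. Qed.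

Lemma form0l y : g 0 y = 0.
Proof. by apply: (@addrI _ (g 0 y)); rewrite -formDl !addr0. Qed.

Lemma form0r x : g x 0 = 0.
Proof. by apply: (@addrI _ (g x 0)); rewrite -formDr !addr0. Qed.

Lemma formZl t x y : g (t *: x) y = t * g x y.
Proof. by rewrite -[t *: x]addr0 (proj1 g_bilin) form0l addr0. Qed.

Lemma formZr t x y : g x (t *: y) = t * g x y.
Proof. by rewrite -[t *: y]addr0 (proj2 g_bilin) form0r addr0. Qed.

Lemma formBl x1 x2 y : g (x1 - x2) y = g x1 y - g x2 y.
Proof. by rewrite -scaleN1r formDl formZl mulN1r. Qed.

Lemma formBr x y1 y2 : g x (y1 - y2) = g x y1 - g x y2.
Proof. by rewrite -scaleN1r formDr formZr mulN1r. Qed.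

Lemma form_suml (I : Type) (s : seq I) (P : pred I) (F : I -> V) y :
  g (\sum_(i <- s | P i) F i) y = \sum_(i <- s | P i) g (F i) y.
Proof. by apply: (big_morph (g^~ y)) => [x1 x2|]; rewrite ?formDl ?form0l. Qed.

Lemma form_sumr (I : Type) (s : seq I) (P : pred I) (F : I -> V) x :
  g x (\sum_(i <- s | P i) F i) = \sum_(i <- s | P i) g x (F i).
Proof. by apply: (big_morph (g x)) => [y1 y2|]; rewrite ?formDr ?form0r. Qed.

Lemma nondeg_exists_nonorth (U : {vspace V}) p :
  nondeg_on g U -> p \in U -> p != 0 -> exists2 W, W \in U & g p W != 0.
Proof.
move=> Unondeg pU /eqP p_neq0; apply: NNPP => no_W; apply/p_neq0/Unondeg => // W WU.
by apply: NNPP => /eqP gpW; apply: no_W; exists W.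
Qed.

Lemma nondeg_orth_hyperplane (U : {vspace V}) p W0 Z :
  nondeg_on g U -> p \in U -> W0 \in U -> g p W0 != 0 -> Z \in U ->
  (forall W, W \in U -> g p W = 0 -> g Z W = 0) ->
  Z = (g Z W0 / g p W0) *: p.
Proof.
move=> Unondeg pU W0U gpW0 ZU Zorth; apply/eqP; rewrite -subr_eq0; apply/eqP.
apply: Unondeg => [|W WU]; first by rewrite memvB ?memvZ.
pose s := g p W / g p W0.
have hyp_W : g p (W - s *: W0) = 0 by rewrite formBr formZr divfK ?subrr.
have := Zorth _ (memvB WU (memvZ s W0U)) hyp_W.
rewrite formBr formZr formBl formZl => /eqP; rewrite subr_eq0 => /eqP ->.
by rewrite /s; ring.
Qed.

End BilinearForm.

Section DirectSum.
Variables (R : realType) (V : vectType R) (r : nat) (E : 'I_r -> {vspace V}).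

Lemma memv_comp i X : Defs.comp E i X \in E i.
Proof. exact: memv_sum_pi. Qed.

Hypothesis E_full : (\sum_(b < r) E b)%VS = fullv.
Hypothesis E_direct : directv (\sum_(b < r) E b).

Lemma sum_comp X : \sum_i Defs.comp E i X = X.
Proof. by apply: sumv_pi_sum; rewrite E_full memvf. Qed.

Lemma comp_sum (u : 'I_r -> V) :
  (forall i, u i \in E i) -> forall i, Defs.comp E i (\sum_j u j) = u i.
Proof.
move=> uE i; have /directv_sum_unique dxE := E_direct.
have := dxE (fun j => Defs.comp E j (\sum_j u j)) u
  (fun j _ => memv_comp j _) (fun j _ => uE j).
by rewrite sum_comp eqxx => /esym /forall_inP /(_ i isT) /eqP.
Qed.

Lemma comp_memv j X i : X \in E j -> Defs.comp E i X = if i == j then X else 0.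
Proof.
move=> XE; have -> : X = \sum_l (if l == j then X else 0).
  by rewrite (bigD1 j) //= eqxx big1 ?addr0 // => l /negPf ->.
rewrite comp_sum; first by rewrite -big_mkcond big_pred1_eq.
by move=> l; case: eqP => [->|]; rewrite ?mem0v.
Qed.

Lemma memv_sum_compP (P : pred 'I_r) Y :
  Y \in (\sum_(b < r | P b) E b)%VS <-> forall b, ~~ P b -> Defs.comp E b Y = 0.
Proof.
split=> [/memv_sumP [vs vsE ->] b nPb | compY].
  rewrite big_mkcond /= comp_sum /=; first by rewrite (negPf nPb).
  by move=> i; case: ifP => Pi; rewrite ?mem0v ?vsE.
rewrite -(sum_comp Y) (bigID P) /= [X in _ + X]big1 ?addr0 //.
by apply: memv_sumr => i _; apply: memv_comp.
Qed.

Lemma comp_single j X :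
  (forall b, b != j -> Defs.comp E b X = 0) -> X = Defs.comp E j X.
Proof.
by move=> compX; rewrite -{1}(sum_comp X) (bigD1 j) //= big1 ?addr0.
Qed.

Variable g : V -> V -> R.
Hypothesis g_bilin : is_bilin_form g.
Hypothesis E_orth : forall b1 b2 : 'I_r, b1 != b2 ->
  forall X Y, X \in E b1 -> Y \in E b2 -> g X Y = 0.

Lemma form_comp_memr b X Y : Y \in E b -> g X Y = g (Defs.comp E b X) Y.
Proof.
move=> YE; rewrite -{1}(sum_comp X) (form_suml g_bilin) (bigD1 b) //= big1 ?addr0 //.
by move=> i ib; apply: (E_orth ib (memv_comp i X) YE).
Qed.

Lemma form_comp_meml b X Y : Y \in E b -> g Y X = g Y (Defs.comp E b X).
Proof.
move=> YE; rewrite -{1}(sum_comp X) (form_sumr g_bilin) (bigD1 b) //= big1 ?addr0 //.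
by move=> i ib; apply: (E_orth _ YE (memv_comp i X)); rewrite eq_sym.
Qed.

End DirectSum.

Section GbarKernel.
Variables (R : realType) (V : vectType R) (g : V -> V -> R).
Variables (k : nat) (E : 'I_k.+1 -> {vspace V}) (p : V).
Variables (C : 'M[R]_(k.+2)) (a : 'I_k.+2).

Hypothesis g_bilin : is_bilin_form g.
Hypothesis E_full : (\sum_(b < k.+1) E b)%VS = fullv.
Hypothesis E_direct : directv (\sum_(b < k.+1) E b).
Hypothesis E_orth : forall b1 b2 : 'I_k.+1, b1 != b2 ->
  forall X Y, X \in E b1 -> Y \in E b2 -> g X Y = 0.
Hypothesis E_nondeg : forall b, nondeg_on g (E b).
Hypothesis p_last : p \in E ord_max.
Hypothesis p_neq0 : p != 0.
Hypothesis g_pp : g p p = 0.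

Local Notation c b := (C (widen_ord (leqnSn k.+1) b) a).
Local Notation l := (C ord_max a).
Local Notation K := (form_ker (gbar g E p C a)).

Hypothesis c_last : c ord_max = 0.

Lemma neq_last_coef b : c b != 0 -> b != ord_max.
Proof. by apply: contra_neq => ->. Qed.

Lemma form_p_memv b Y : Y \in E b -> b != ord_max -> g p Y = 0.
Proof. by move=> YE bmx; apply: (E_orth _ p_last YE); rewrite eq_sym. Qed.

Lemma gbar_memvr j X Y : Y \in E j ->
  gbar g E p C a X Y = c j * g (Defs.comp E j X) Y + l * (g p X * g p Y).
Proof.
move=> YE; rewrite /gbar /gpart (bigD1 j) //= big1 ?addr0.
  by rewrite (comp_memv E_full E_direct _ YE) eqxx.
by move=> i ij; rewrite (comp_memv E_full E_direct _ YE) (negPf ij) form0r ?mulr0.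
Qed.

Lemma form_kerP X :
  K X <-> (forall b, c b != 0 -> Defs.comp E b X = 0) /\ (l != 0 -> g p X = 0).
Proof.
split=> [KX | [compX pX] Y].
  split=> [b cb | l_neq0].
    apply: (E_nondeg (memv_comp _ _ _)) => Y YE.
    move: (KX Y); rewrite (gbar_memvr _ YE).
    rewrite (form_p_memv YE (neq_last_coef cb)) !mulr0 addr0.
    by move/eqP; rewrite mulf_eq0 (negPf cb) => /eqP.
  have [W0 W0E pW0] := nondeg_exists_nonorth (@E_nondeg ord_max) p_last p_neq0.
  move: (KX W0); rewrite (gbar_memvr _ W0E) c_last mul0r add0r.
  by move/eqP; rewrite !mulf_eq0 (negPf l_neq0) (negPf pW0) orbF => /eqP.
rewrite /gbar /gpart big1 ?add0r => [|b _].
  by have [->|/pX ->] := eqVneq l 0; rewrite ?mul0r ?mulr0.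
by have [->|/compX ->] := eqVneq (c b) 0; rewrite ?mul0r ?form0l ?mulr0.
Qed.

Lemma restr_ker_comp X b :
  restr_ker g K X -> (l != 0 -> b != ord_max) -> Defs.comp E b X = 0.
Proof.
move=> [KX Xorth] bmx; have [cb|cb] := eqVneq (c b) 0; last first.
  by apply: (proj1 (proj1 (form_kerP X) KX)).
apply: (E_nondeg (memv_comp _ _ _)) => Y YE.
rewrite -form_comp_memr //; apply: Xorth; apply/form_kerP; split.
  move=> b' cb'; rewrite (comp_memv E_full E_direct _ YE).
  by case: eqP => // eb; move: cb'; rewrite eb cb eqxx.
by move=> /bmx; apply: form_p_memv.
Qed.

Lemma form_ker_coef0 X : l = 0 ->
  K X <-> X \in (\sum_(b < k.+1 | c b == 0%R) E b)%VS.
Proof.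
move=> l0; rewrite form_kerP (memv_sum_compP E_full E_direct).
by rewrite l0 eqxx; split=> [[] | compX] //; split.
Qed.

Lemma restr_ker_coef0 X : l = 0 -> restr_ker g K X <-> X = 0.
Proof.
move=> l0; split=> [KX | ->].
  rewrite -(sum_comp E_full X) big1 // => b _.
  by apply: (restr_ker_comp KX); rewrite l0 eqxx.
split=> [|Y _]; last exact: form0l.
by apply/form_kerP; split=> [b _ | _]; rewrite ?linear0 ?form0r.
Qed.

Lemma form_ker_coef_neq0 X : l != 0 ->
  K X <-> exists Y Z, Y \in (\sum_(b < k.+1 | (b < k)%N && (c b == 0%R)) E b)%VS /\
                      Z \in E ord_max /\ g p Z = 0 /\ X = Y + Z.
Proof.
move=> l_neq0; rewrite form_kerP.
have compE := comp_memv E_full E_direct.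
split=> [[compX pX] | [Y [Z [/(memv_sum_compP E_full E_direct) compY [ZE [pZ ->]]]]]].
  exists (X - Defs.comp E ord_max X), (Defs.comp E ord_max X).
  split; last split; [|exact: memv_comp|split; last by rewrite subrK].
    apply/(memv_sum_compP E_full E_direct) => b.
    rewrite linearB /= (compE _ _ _ (memv_comp _ _ _)).
    have [->|bmx] := eqVneq b ord_max; first by rewrite subrr.
    have bk : (b < k)%N.
      by rewrite ltn_neqAle -ltnS ltn_ord andbT; move: bmx; rewrite -(inj_eq val_inj).
    by rewrite bk /= => cb; rewrite compX ?subr0.
  by rewrite -form_comp_meml ?pX.
split=> [b cb | _].
  have /compY Yb : ~~ ((b < k)%N && (c b == 0)) by rewrite (negPf cb) andbF.
  rewrite linearD /= Yb.
  by rewrite (compE _ _ _ ZE) (negPf (neq_last_coef cb)) add0r.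
rewrite formDr // pZ addr0 (form_comp_meml E_full g_bilin E_orth _ p_last).
by rewrite compY ?form0r //= ltnn.
Qed.

Lemma restr_ker_coef_neq0 X : l != 0 ->
  restr_ker g K X <-> exists t : R, X = t *: p.
Proof.
move=> l_neq0; split=> [KX | [t ->]]; last first.
  split=> [|Y /form_kerP [_ /(_ l_neq0) pY]]; last by rewrite formZl // pY mulr0.
  apply/form_kerP; split=> [b cb | _]; last by rewrite formZr // g_pp mulr0.
  rewrite (comp_memv E_full E_direct _ (memvZ t p_last)).
  by rewrite (negPf (neq_last_coef cb)).
have XE : X = Defs.comp E ord_max X.
  by apply: comp_single => // b bmx; apply: (restr_ker_comp KX).
have [W0 W0E pW0] := nondeg_exists_nonorth (@E_nondeg ord_max) p_last p_neq0.
exists (g X W0 / g p W0); rewrite {1 2}XE.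
apply: (nondeg_orth_hyperplane g_bilin (@E_nondeg ord_max) p_last W0E pW0).
  exact: memv_comp.
move=> W WE pW; rewrite -XE; apply: (proj2 KX); apply/form_kerP.
split=> [b cb | _ //]; rewrite (comp_memv E_full E_direct _ WE).
by rewrite (negPf (neq_last_coef cb)).
Qed.

End GbarKernel.
Theorem lemma1 (R : realType) (V : vectType R) (g : V -> V -> R)
  (k : nat) (E : 'I_k.+1 -> {vspace V}) (p : V) (C : 'M[R]_(k.+2)) :
  is_bilin_form g -> is_symm_form g -> lorentzian_on g fullv ->
  (\sum_(b < k.+1) E b)%VS = fullv ->
  directv (\sum_(b < k.+1) E b) ->
  (forall b1 b2 : 'I_k.+1, b1 != b2 ->
     forall X Y, X \in E b1 -> Y \in E b2 -> g X Y = 0) ->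
  (forall b, nondeg_on g (E b)) ->
  lorentzian_on g (E ord_max) ->
  p \in E ord_max -> p != 0 -> g p p = 0 ->
  (forall X Y, gbar g E p C ord0 X Y = g X Y) ->
  (forall c : 'I_k.+2 -> R,
     (forall X Y, \sum_(a < k.+2) c a * gbar g E p C a X Y = 0) ->
     forall a, c a = 0) ->
  (forall a : 'I_k.+2, a != ord0 ->
     C (widen_ord (leqnSn _) ord_max) a = 0) ->
  forall a : 'I_k.+2, a != ord0 ->
  (C ord_max a = 0 ->
     (forall X, form_ker (gbar g E p C a) X <->
        X \in (\sum_(b < k.+1 | C (widen_ord (leqnSn _) b) a == 0%R) E b)%VS) /\
     (forall X, restr_ker g (form_ker (gbar g E p C a)) X <-> X = 0)) /\
  (C ord_max a != 0 ->
     (forall X, form_ker (gbar g E p C a) X <->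
        exists Y Z, Y \in (\sum_(b < k.+1 | (b < k)%N &&
                          (C (widen_ord (leqnSn _) b) a == 0%R)) E b)%VS /\
                    Z \in E ord_max /\ g p Z = 0 /\ X = Y + Z) /\
     (forall X, restr_ker g (form_ker (gbar g E p C a)) X <->
        exists t : R, X = t *: p)).
Proof.
move=> g_bilin _ _ E_full E_direct E_orth E_nondeg _ p_last p_neq0 g_pp _ _ c_last a a0.
have c_last_a := c_last a a0.
split=> coef_theta; split=> X.
- exact: (form_ker_coef0 g_bilin E_full E_direct E_orth E_nondeg
            p_last p_neq0 c_last_a X coef_theta).
- exact: (restr_ker_coef0 g_bilin E_full E_direct E_orth E_nondeg
            p_last p_neq0 c_last_a X coef_theta).
- exact: (form_ker_coef_neq0 g_bilin E_full E_direct E_orth E_nondeg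
            p_last p_neq0 c_last_a X coef_theta).
- exact: (restr_ker_coef_neq0 g_bilin E_full E_direct E_orth E_nondeg
            p_last p_neq0 g_pp c_last_a X coef_theta).
Qed.
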